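(* For any family of policies $\Pi$, $\mathrm{CH}(\Pi)\subseteq\mathrm{CDUS}(\Pi)$.
   Context: $\Pi=\{\pi_1,\pi_2,\dots\}$ is a family of policies of a multi-objective sequential decision problem with $d$ objectives; each $\pi\in\Pi$ has a random return vector $\mathbf{Z}^\pi\in\mathbb{R}^d$ with finite expectation $\mathbf{V}^\pi=\mathbb{E}[\mathbf{Z}^\pi]$. $\Delta^{|\Pi|}$ denotes probability weight vectors $\lambda$ over $\Pi$, and $\sum_i\lambda_i\mathbf{Z}^{\pi_i}$ denotes the mixture distribution (CDF $\sum_i\lambda_iF_{\mathbf{Z}^{\pi_i}}$). For $\mathbf{x},\mathbf{y}\in\mathbb{R}^d$: $\mathbf{y}\preceq_p\mathbf{x}$ iff $y_i\le x_i$ for all $i$; $\mathbf{x}\succ_p\mathbf{y}$ iff $x_i\ge y_i$ for all $i$ and $x_i>y_i$ for some $i$. CDF: $F_{\mathbf{X}}(\mathbf{x})=P(\mathbf{X}\preceq_p\mathbf{x})$. $\mathbf{X}\succeq_{\mathrm{FSD}}\mathbf{Y}$ iff $F_{\mathbf{X}}\le F_{\mathbf{Y}}$ pointwise; $\succ_{\mathrm{FSD}}$ additionally requires strict inequality at some point. $\mathbf{X}\succ_d\mathbf{Y}$ iff $\mathbf{X}\succeq_{\mathrm{FSD}}\mathbf{Y}$ and $X_j\succ_{\mathrm{FSD}}Y_j$ for some marginal $j$. Convex hull: $\mathrm{CH}(\Pi)=\{\pi\in\Pi:\nexists\lambda\in\Delta^{|\Pi|},\ \sum_i\lambda_i\mathbf{V}^{\pi_i}\succ_p\mathbf{V}^\pi\}$.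 Convex distributional undominated set: $\mathrm{CDUS}(\Pi)=\{\pi\in\Pi:\nexists\lambda\in\Delta^{|\Pi|},\ \sum_i\lambda_i\mathbf{Z}^{\pi_i}\succ_d\mathbf{Z}^\pi\}$. *)

From HB Require Import structures.
From mathcomp Require Import all_boot all_order all_algebra.
From mathcomp Require Import all_classical all_reals all_analysis.
Set Implicit Arguments. Unset Strict Implicit. Unset Printing Implicit Defensive.
Import Order.TTheory GRing.Theory Num.Theory.
Local Open Scope ring_scope.
Local Open Scope classical_set_scope.

Section Defs.
Variables (R : realType) (d : nat).

Definition pleq (y x : 'I_d -> R) : Prop := forall j, y j <= x j.
Definition psucc (x y : 'I_d -> R) : Prop :=
  (forall j, y j <= x j) /\ (exists j, y j < x j).

(* A (real-valued) distribution on R^d is described, for the purpose of the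
   dominance relations, by its joint CDF and its d marginal CDFs. *)
Record dist_cdfs := DistCdfs {
  joint_cdf : ('I_d -> R) -> R ;
  marg_cdf : 'I_d -> R -> R }.

Definition cdfs_of {dm : measure_display} {T : measurableType dm}
  (P : probability T R) (Z : T -> 'I_d -> R) : dist_cdfs :=
  DistCdfs (fun x => fine (P [set w : T | pleq (Z w) x]))
           (fun j t => fine (P [set w : T | Z w j <= t])).

Definition expect_vec {dm : measure_display} {T : measurableType dm}
  (P : probability T R) (Z : T -> 'I_d -> R) : 'I_d -> R :=
  fun j => fine (\int[P]_w (Z w j)%:E)%E.

Definition simplex (n : nat) (lam : 'I_n -> R) : Prop :=
  (forall i, 0 <= lam i) /\ \sum_(i < n) lam i = 1.

(* Mixture distribution sum_i lam_i Z^{pi_i}: its CDF is sum_i lam_i F_i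
   (and so are its marginal CDFs). *)
Definition mixture (n : nat) (lam : 'I_n -> R) (D : 'I_n -> dist_cdfs)
  : dist_cdfs :=
  DistCdfs (fun x => \sum_(i < n) lam i * joint_cdf (D i) x)
           (fun j t => \sum_(i < n) lam i * marg_cdf (D i) j t).

Definition mix_vec (n : nat) (lam : 'I_n -> R) (V : 'I_n -> 'I_d -> R)
  : 'I_d -> R := fun j => \sum_(i < n) lam i * V i j.

Definition sfsd1 (FX FY : R -> R) : Prop :=
  (forall t, FX t <= FY t) /\ (exists t, FX t < FY t).

Definition wfsd (X Y : dist_cdfs) : Prop :=
  forall x, joint_cdf X x <= joint_cdf Y x.

Definition ddom (X Y : dist_cdfs) : Prop :=
  wfsd X Y /\ exists j, sfsd1 (marg_cdf X j) (marg_cdf Y j).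

Definition CH (n : nat) (V : 'I_n -> 'I_d -> R) (k : 'I_n) : Prop :=
  ~ exists lam, simplex lam /\ psucc (mix_vec lam V) (V k).

Definition CDUS (n : nat) (D : 'I_n -> dist_cdfs) (k : 'I_n) : Prop :=
  ~ exists lam, simplex lam /\ ddom (mixture lam D) (D k).
End Defs.

From HB Require Import structures.
From mathcomp Require Import all_boot all_order all_algebra.
From mathcomp Require Import all_classical all_reals all_analysis.
From mathcomp Require Import measurable_realfun lra.
Import Order.TTheory GRing.Theory Num.Theory.
Import numFieldNormedType.Exports.
Local Open Scope ring_scope.
Local Open Scope classical_set_scope.

(** If the mixture [sum_i lam_i Z^i] dominates [Z^k] distributionally, then
letting all but the [j]-th coordinate of the joint CDFs tend to [+oo] shows
that each marginal CDF of the mixture, [sum_i lam_i F_ij], lies below [F_kj].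
The mean of a distribution with CDF [F] is [int_0^oo (1 - F) - int_-oo^0 F],
which is affine and antitone in [F]; hence [V^k_j <= sum_i lam_i V^i_j] for
every [j].  At the coordinate where the marginal dominance is strict,
right-continuity of CDFs spreads the strict inequality at one point over an
interval, which makes the inequality of means strict.  So the mixture of the
expected returns Pareto-dominates [V^k], and [k] is not in the convex hull. *)

Lemma ge0_integral_lincomb (dT : measure_display) (T : measurableType dT)
    (R : realType) (mu : {measure set T -> \bar R}) (D : set T)
    (mD : measurable D) (n : nat) (lam : 'I_n -> R) (f : 'I_n -> T -> R) :
  (forall i, 0 <= lam i) -> (forall i, measurable_fun D (f i)) ->
  (forall i x, D x -> 0 <= f i x) ->
  (\int[mu]_(x in D) (\sum_(i < n) lam i * f i x)%:E =
   \sum_(i < n) (lam i)%:E * \int[mu]_(x in D) (f i x)%:E)%E.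
Proof.
move=> lam0 mf f0.
under eq_integral do rewrite -sumEFin.
rewrite ge0_integral_sum //; last 2 first.
- by move=> i; apply/measurable_EFinP; exact: measurable_funM.
- by move=> i x Dx; rewrite lee_fin mulr_ge0 ?f0.
apply: eq_bigr => i _; under eq_integral do rewrite EFinM.
rewrite ge0_integralZl_EFin //; first by move=> x Dx; rewrite lee_fin f0.
exact/measurable_EFinP.
Qed.

Lemma lebesgue_integral_lt_of_gap {R : realType} {D : set R} (mD : measurable D)
    {f g : R -> R} {a b e : R} :
  measurable_fun D f -> measurable_fun D g ->
  (forall t, D t -> 0 <= f t) -> (forall t, D t -> f t <= g t) ->
  (\int[lebesgue_measure]_(t in D) (f t)%:E \is a fin_num)%E ->
  a < b -> 0 < e -> `[a, b] `<=` D ->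
  (forall t, a <= t <= b -> f t + e <= g t) ->
  (\int[lebesgue_measure]_(t in D) (f t)%:E <
   \int[lebesgue_measure]_(t in D) (g t)%:E)%E.
Proof.
move=> mf mg f0 fg fin ab e0 abD gap.
pose bump t := e * \1_(`[a, b] : set R) t.
have mab : measurable (`[a, b] : set R) by exact: measurable_itv.
have mbump : measurable_fun D bump.
  by apply: measurable_funM => //; exact: measurable_indic.
have bump0 t : 0 <= bump t.
  by rewrite /bump indicE mulr_ge0 ?ler0n // ltW.
have int_bump : (\int[lebesgue_measure]_(t in D) (bump t)%:E = (e * (b - a))%:E)%E.
  under eq_integral do rewrite EFinM.
  rewrite ge0_integralZl_EFin ?ltW //; last exact/measurable_EFinP/measurable_indic.
  rewrite integral_indic // setIidl //.
  have := lebesgue_measure_itv `[a, b]%R; rewrite /= lte_fin ab -EFinB => ->.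
  by rewrite -EFinM.
apply: (@lt_le_trans _ _ (\int[lebesgue_measure]_(t in D) (f t + bump t)%:E)%E).
  under [X in (_ < X)%E]eq_integral do rewrite EFinD.
  rewrite ge0_integralD //; last 3 first.
  - exact/measurable_EFinP.
  - by move=> t _; rewrite lee_fin.
  - exact/measurable_EFinP.
  by rewrite int_bump lteDl // lte_fin mulr_gt0 // subr_gt0.
apply: ge0_le_integral => //.
- by move=> t Dt; rewrite lee_fin addr_ge0 ?f0.
- exact/measurable_EFinP/measurable_funD.
- exact/measurable_EFinP.
move=> t Dt; rewrite lee_fin /bump indicE.
have [/[!inE] tab | _] := boolP (t \in _); last by rewrite mulr0 addr0 fg.
by rewrite mulr1 gap // -(@in_itv _ `[a, b]).
Qed.

Section cdf_mean.
Context {R : realType}.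

Let mpos : measurable (`[0%R, +oo[ : set R). Proof. exact: measurable_itv. Qed.
Let mneg : measurable (`]-oo, 0%R[ : set R). Proof. exact: measurable_itv. Qed.

Definition upper_tail_integral (c : R -> R) : \bar R :=
  (\int[lebesgue_measure]_(t in `[0%R, +oo[) (1 - c t)%:E)%E.

Definition lower_tail_integral (c : R -> R) : \bar R :=
  (\int[lebesgue_measure]_(t in `]-oo, 0%R[) (c t)%:E)%E.

(* [cdf_mean c] is the mean of the distribution with CDF [c] (layer-cake formula). *)
Definition cdf_mean (c : R -> R) : R :=
  fine (upper_tail_integral c) - fine (lower_tail_integral c).

Definition finite_mean_cdf (c : R -> R) : Prop :=
  [/\ forall t, 0 <= c t, forall t, c t <= 1, {homo c : s t / s <= t},
      upper_tail_integral c \is a fin_num & lower_tail_integral c \is a fin_num].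

Lemma measurable_fun_cdf_ccdf {c : R -> R} {D : set R} : measurable D ->
  {homo c : s t / s <= t} ->
  measurable_fun D c /\ measurable_fun D (fun t => 1 - c t).
Proof.
move=> mD c_nd; split; first exact: nondecreasing_measurable.
by apply: nonincreasing_measurable => // s t st; rewrite lerB // c_nd.
Qed.

Section cdf_mean_antitone.
Context {f g : R -> R}.
Hypotheses (hf : finite_mean_cdf f) (hg : finite_mean_cdf g).
Hypothesis fg : forall t, f t <= g t.

Lemma upper_tail_integral_le : (upper_tail_integral g <= upper_tail_integral f)%E.
Proof.
case: hf hg => _ _ f_nd _ _ [_ g1 g_nd _ _].
have [_ mf] := measurable_fun_cdf_ccdf mpos f_nd.
have [_ mg] := measurable_fun_cdf_ccdf mpos g_nd.
apply: ge0_le_integral => //.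
- by move=> t _; rewrite lee_fin subr_ge0.
- exact/measurable_EFinP.
- exact/measurable_EFinP.
- by move=> t _; rewrite lee_fin lerB.
Qed.

Lemma lower_tail_integral_le : (lower_tail_integral f <= lower_tail_integral g)%E.
Proof.
case: hf hg => f0 _ f_nd _ _ [_ _ g_nd _ _].
have [mf _] := measurable_fun_cdf_ccdf mneg f_nd.
have [mg _] := measurable_fun_cdf_ccdf mneg g_nd.
apply: ge0_le_integral => //.
- by move=> t _; rewrite lee_fin.
- exact/measurable_EFinP.
- exact/measurable_EFinP.
- by move=> t _; rewrite lee_fin.
Qed.

Lemma cdf_mean_le : cdf_mean g <= cdf_mean f.
Proof.
case: hf hg => _ _ _ fu fl [_ _ _ gu gl].
rewrite /cdf_mean lerB // fine_le //.
- exact: upper_tail_integral_le.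
- exact: lower_tail_integral_le.
Qed.

Lemma cdf_mean_lt_of_gap {a b e : R} : a < b -> 0 < e ->
  (forall t, a <= t <= b -> f t + e <= g t) -> cdf_mean g < cdf_mean f.
Proof.
move=> ab e0 gap.
case: hf hg => f0 _ f_nd fu fl [_ g1 g_nd gu gl].
have [_ mf_up] := measurable_fun_cdf_ccdf mpos f_nd.
have [_ mg_up] := measurable_fun_cdf_ccdf mpos g_nd.
have [mf_low _] := measurable_fun_cdf_ccdf mneg f_nd.
have [mg_low _] := measurable_fun_cdf_ccdf mneg g_nd.
(* The gap either meets [0, +oo[ at its left end or can be shrunk into ]-oo, 0[. *)
rewrite /cdf_mean; have [a0 | a0] := leP 0 a.
- have : (upper_tail_integral g < upper_tail_integral f)%E.
    apply: (lebesgue_integral_lt_of_gap mpos mg_up mf_up _ _ gu ab e0).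
    + by move=> t _; rewrite subr_ge0.
    + by move=> t _; rewrite lerB.
    + move=> t /=; rewrite !in_itv /= andbT => /andP[a_t _]; exact: le_trans a0 a_t.
    + by move=> t /gap; lra.
  rewrite -(fineK fu) -(fineK gu) lte_fin => ult.
  have := fine_le fl gl lower_tail_integral_le; lra.
- pose b' := Num.min b (a / 2).
  have ab' : a < b' by rewrite lt_min ab /=; lra.
  have b'a : b' <= a / 2 by rewrite ge_min lexx orbT.
  have : (lower_tail_integral f < lower_tail_integral g)%E.
    apply: (lebesgue_integral_lt_of_gap mneg mf_low mg_low _ _ fl ab' e0) => //.
    + move=> t /=; rewrite !in_itv /= => /andP[_ tb']; lra.
    + by move=> t /andP[a_t tb']; apply: gap; rewrite a_t (le_trans tb') // ge_min lexx.
  rewrite -(fineK fl) -(fineK gl) lte_fin => llt.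
  have := fine_le gu fu upper_tail_integral_le; lra.
Qed.

End cdf_mean_antitone.

Lemma right_continuous_gap {f g : R -> R} {t0 : R} :
  f x @[x --> t0^'+] --> f t0 -> {homo g : s t / s <= t} -> f t0 < g t0 ->
  exists a b e, [/\ a < b, 0 < e & forall t, a <= t <= b -> f t + e <= g t].
Proof.
move=> f_rc g_nd fg0.
pose e := (g t0 - f t0) / 2.
have e0 : 0 < e by rewrite divr_gt0 // subr_gt0.
have := cvgr_le _ f_rc (f t0 + e) ltac:(by rewrite ltrDl); case=> d /= d0 near_t0.
exists (t0 + d / 4), (t0 + d / 2), e; split; [lra | by [] | move=> t /andP[a_t tb]].
have ft : f t <= f t0 + e.
  by apply: near_t0; [rewrite /= distrC ger0_norm; lra | lra].
have t0t : t0 <= t by lra.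
have := g_nd _ _ t0t; rewrite /e in ft *; lra.
Qed.

Section cdf_mean_mixture.
Context {n : nat} {lam : 'I_n -> R} {c : 'I_n -> R -> R}.
Hypotheses (hlam : simplex lam) (hc : forall i, finite_mean_cdf (c i)).

Let lam0 i : 0 <= lam i. Proof. by case: hlam. Qed.

Lemma upper_tail_integral_mix :
  upper_tail_integral (fun t => \sum_(i < n) lam i * c i t) =
  (\sum_(i < n) (lam i)%:E * upper_tail_integral (c i))%E.
Proof.
case: hlam => _ lam1.
rewrite /upper_tail_integral -ge0_integral_lincomb //; last 2 first.
- by move=> i; have [_ _ c_nd _ _] := hc i; have [] := measurable_fun_cdf_ccdf mpos c_nd.
- by move=> i t _; have [_ c1 _ _ _] := hc i; rewrite subr_ge0.
apply: eq_integral => t _; congr EFin.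
by rewrite -[in LHS]lam1 -sumrB; apply: eq_bigr => i _; rewrite mulrBr mulr1.
Qed.

Lemma lower_tail_integral_mix :
  lower_tail_integral (fun t => \sum_(i < n) lam i * c i t) =
  (\sum_(i < n) (lam i)%:E * lower_tail_integral (c i))%E.
Proof.
rewrite /lower_tail_integral -ge0_integral_lincomb //.
- by move=> i; have [_ _ c_nd _ _] := hc i; have [] := measurable_fun_cdf_ccdf mneg c_nd.
- by move=> i t _; have [c0 _ _ _ _] := hc i.
Qed.

Let fine_mix (x : 'I_n -> \bar R) : (forall i, x i \is a fin_num) ->
  (\sum_(i < n) (lam i)%:E * x i)%E = (\sum_(i < n) lam i * fine (x i))%:E.
Proof. by move=> x_fin; rewrite -sumEFin; apply: eq_bigr => i _; rewrite EFinM fineK. Qed.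

Lemma finite_mean_cdf_mix : finite_mean_cdf (fun t => \sum_(i < n) lam i * c i t).
Proof.
case: hlam => _ lam1; split.
- by move=> t; apply: sumr_ge0 => i _; have [c0 _ _ _ _] := hc i; rewrite mulr_ge0.
- move=> t; rewrite -lam1; apply: ler_sum => i _.
  by have [_ c1 _ _ _] := hc i; rewrite ler_piMr.
- by move=> s t st; apply: ler_sum => i _; have [_ _ c_nd _ _] := hc i; rewrite ler_wpM2l ?c_nd.
- by rewrite upper_tail_integral_mix fine_mix // => i; have [] := hc i.
- by rewrite lower_tail_integral_mix fine_mix // => i; have [] := hc i.
Qed.

Lemma cdf_mean_mix :
  cdf_mean (fun t => \sum_(i < n) lam i * c i t) = \sum_(i < n) lam i * cdf_mean (c i).
Proof.
rewrite /cdf_mean upper_tail_integral_mix lower_tail_integral_mix.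
rewrite !fine_mix /= -?sumrB; last 2 first.
- by move=> i; have [] := hc i.
- by move=> i; have [] := hc i.
by apply: eq_bigr => i _; rewrite mulrBr.
Qed.

Lemma cdf_mean_mix_le (k : 'I_n) :
  (forall t, \sum_(i < n) lam i * c i t <= c k t) ->
  cdf_mean (c k) <= \sum_(i < n) lam i * cdf_mean (c i).
Proof. by move=> mix_le; rewrite -cdf_mean_mix; apply: cdf_mean_le finite_mean_cdf_mix _ _. Qed.

Lemma cdf_mean_mix_lt (k : 'I_n) : (forall i, right_continuous (c i)) ->
  sfsd1 (fun t => \sum_(i < n) lam i * c i t) (c k) ->
  cdf_mean (c k) < \sum_(i < n) lam i * cdf_mean (c i).
Proof.
move=> c_rc [mix_le [t0 mix_lt]]; rewrite -cdf_mean_mix.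
have mix_rc : (\sum_(i < n) lam i * c i t) @[t --> t0^'+] --> \sum_(i < n) lam i * c i t0.
  by apply: cvg_big => [|i _]; [exact: add_continuous | apply: cvgM; [exact: cvg_cst | exact: c_rc]].
have [_ _ ck_nd _ _] := hc k.
have [a [b [e [ab e0 gap]]]] := right_continuous_gap mix_rc ck_nd mix_lt.
exact: (cdf_mean_lt_of_gap finite_mean_cdf_mix (hc k) mix_le ab e0 gap).
Qed.
End cdf_mean_mixture.
End cdf_mean.

Definition real_cdf {dT : measure_display} {T : measurableType dT} {R : realType}
  (P : probability T R) (X : T -> R) (t : R) : R := fine (P [set w | X w <= t]).

Lemma measurable_le_set {dT : measure_display} {T : measurableType dT} {R : realType}
    {X : T -> R} (t : R) :
  measurable_fun setT X -> measurable [set w | X w <= t].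
Proof. by move=> mX; rewrite -[X in measurable X]setTI; exact: measurable_fun_le. Qed.

Section real_cdf.
Context {dT : measure_display} {T : measurableType dT} {R : realType}.
Context {P : probability T R}.

Section measurable_variable.
Context {X : T -> R}.
Hypothesis mX : measurable_fun setT X.

Let Xrv : {RV P >-> R} := mfun_Sub (mem_set mX : X \in mfun).

Let cdfE t : cdf Xrv t = (real_cdf P X t)%:E.
Proof. by rewrite /real_cdf fineK ?fin_num_measure //; exact: measurable_le_set. Qed.

Lemma real_cdf_right_continuous : right_continuous (real_cdf P X).
Proof.
move=> t; have -> : real_cdf P X = fine \o cdf Xrv by apply/funext => s /=; rewrite cdfE.
by apply: fine_cvg; rewrite -cdfE; exact: cdf_right_continuous.
Qed.

Hypothesis iX : P.-integrable setT (fun w => (X w)%:E).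

Let layer_cake : (\int[P]_w (X w)%:E =
  upper_tail_integral (real_cdf P X) - lower_tail_integral (real_cdf P X))%E.
Proof.
have L1 : (Xrv : T -> R) \in Lfun P 1 by apply/Lfun1_integrable.
have := expectation_cdf_ccdf L1; rewrite expectation_def => ->.
by congr (_ - _)%E; apply: eq_integral => t _; rewrite ?ccdf_1_cdf cdfE.
Qed.

Lemma real_cdf_finite_mean : finite_mean_cdf (real_cdf P X).
Proof.
have := integrable_fin_num measurableT iX; rewrite layer_cake fin_numB => /andP[up_fin low_fin].
split => //.
- by move=> t; exact: fine_ge0.
- by move=> t; rewrite -lee_fin -cdfE cdf_le1.
- by move=> s t st; rewrite -lee_fin -!cdfE cdf_nondecreasing.
Qed.

Lemma expectation_real_cdf : fine (\int[P]_w (X w)%:E)%E = cdf_mean (real_cdf P X).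
Proof. by rewrite layer_cake fineB //; have [] := real_cdf_finite_mean. Qed.

End measurable_variable.

Section random_vector.
Context {d : nat} {Z : T -> 'I_d -> R}.
Hypothesis mZ : forall j, measurable_fun setT (fun w => Z w j).

Lemma measurable_pleq_set (x : 'I_d -> R) : measurable [set w | pleq (Z w) x].
Proof.
have -> : [set w | pleq (Z w) x] = \bigcap_(j in setT) [set w | Z w j <= x j].
  by apply/seteqP; split => [w Zx j _ | w Zx j]; exact: Zx.
apply: fin_bigcap_measurable; first exact: finite_finset.
by move=> j _; exact: measurable_le_set.
Qed.

Lemma joint_cdf_cvg_marg_cdf (j : 'I_d) (t : R) :
  (fun m : nat => joint_cdf (cdfs_of P Z) (fun i => if i == j then t else m%:R))
    @ \oo --> marg_cdf (cdfs_of P Z) j t.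
Proof.
pose A m := [set w | pleq (Z w) (fun i => if i == j then t else m%:R)].
have A_cup : \bigcup_m A m = [set w | Z w j <= t].
  apply/seteqP; split => [w [m _ Aw] | w /= Zt].
    by have := Aw j; rewrite eqxx.
  exists (Num.truncn (\sum_i `|Z w i|)).+1 => // i; case: eqP => [-> //|_].
  apply: le_trans (ltW (truncnS_gt _)); apply: le_trans (ler_norm _) _.
  by rewrite (bigD1 i) //= lerDl sumr_ge0.
have A_nd : nondecreasing_seq A.
  move=> m m' mm'; apply/subsetPset => w Aw i.
  by have := Aw i; case: eqP => // _ /le_trans; apply; rewrite ler_nat.
have mA : measurable (\bigcup_m A m).
  by rewrite A_cup; exact: measurable_le_set.
have := nondecreasing_cvg_mu (mu := P) (fun m => measurable_pleq_set _) mA A_nd.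
rewrite A_cup => PA_cvg; apply: fine_cvg.
by rewrite fineK // fin_num_measure // -A_cup.
Qed.

End random_vector.
End real_cdf.

Lemma wfsd_mixture_marg_cdf_le {R : realType} {d n : nat}
    {dm : 'I_n -> measure_display} {T : forall i, measurableType (dm i)}
    {P : forall i, probability (T i) R} {Z : forall i, T i -> 'I_d -> R}
    {lam : 'I_n -> R} {k : 'I_n} :
  (forall i j, measurable_fun setT (fun w => Z i w j)) ->
  let D i := cdfs_of (P i) (Z i) in
  wfsd (mixture lam D) (D k) ->
  forall j t, marg_cdf (mixture lam D) j t <= marg_cdf (D k) j t.
Proof.
move=> mZ D joint_le j t.
have mix_cvg : (fun m : nat => joint_cdf (mixture lam D) (fun i => if i == j then t else m%:R))
    @ \oo --> marg_cdf (mixture lam D) j t.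
  apply: cvg_big => [|i _]; first exact: add_continuous.
  by apply: cvgM; [exact: cvg_cst | exact: joint_cdf_cvg_marg_cdf (mZ i) j t].
apply: ler_cvg_to mix_cvg (joint_cdf_cvg_marg_cdf (P := P k) (mZ k) j t) _.
by apply: nearW => m; exact: joint_le.
Qed.

Theorem corollary5p1p1 (R : realType) (d n : nat)
  (dm : 'I_n -> measure_display) (T : forall i, measurableType (dm i))
  (P : forall i, probability (T i) R) (Z : forall i, T i -> 'I_d -> R)
  (hint : forall i j, (P i).-integrable setT (fun w => (Z i w j)%:E)) :
  forall k : 'I_n,
    CH (fun i => expect_vec (P i) (Z i)) k ->
    CDUS (fun i => cdfs_of (P i) (Z i)) k.
Proof.
move=> k k_CH [lam [hlam [joint_le [j marg_lt]]]]; apply: k_CH.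
exists lam; split => //.
have mZ i j' : measurable_fun setT (fun w => Z i w j').
  by apply/measurable_EFinP; exact: measurable_int (hint i j').
have cdf_fin i j' := real_cdf_finite_mean (mZ i j') (hint i j').
have EV i j' : expect_vec (P i) (Z i) j' = cdf_mean (real_cdf (P i) (fun w => Z i w j')).
  exact: expectation_real_cdf (mZ i j') (hint i j').
have marg_le := wfsd_mixture_marg_cdf_le mZ joint_le.
rewrite /mix_vec; split => [j' | ]; [| exists j]; rewrite EV; under eq_bigr do rewrite EV.
- by apply: (cdf_mean_mix_le hlam (cdf_fin^~ j')) => t; exact: marg_le.
- have cdf_rc i := real_cdf_right_continuous (P := P i) (mZ i j).
  exact: cdf_mean_mix_lt hlam (cdf_fin^~ j) k cdf_rc marg_lt.
Qed.
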